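(* Let $V$ be an amenable collection of vectors subordinate to a $\mathbb{Q}$-nef partition $E_1,\dots,E_{k+1}$ of a complete fan $\Sigma$. Let $C$ be a cone of $\Sigma$ such that $C\cap M_V$ contains a nonzero point. Then some primitive ray generator of $C$ is contained in $E_{k+1}$.
   Context: $M$ lattice of rank $n$, $N=\mathrm{Hom}(M,\mathbb{Z})$; $\Sigma$ complete fan of strictly convex rational cones in $M_\mathbb{R}$, $\Sigma[1]$ primitive ray generators. $\mathbb{Q}$-nef partition: ordered partition $\Sigma[1]=E_1\sqcup\dots\sqcup E_{k+1}$ with convex rational $\Sigma$-piecewise linear functions $\varphi_i$ with $\varphi_i(\rho)=\delta_{ij}$ on $E_j$. Amenable collection: $V=\{v_1,\dots,v_k\}\subset N$ with $\langle v_i,\rho\rangle=-1$ on $E_i$, $\ge0$ on $E_j$ for $i<j\le k+1$, $=0$ on $E_j$ for $j<i$. $M_V=\{u\in M_\mathbb{R}:\langle v_i,u\rangle=0\ \forall i\}$. *)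

(* M_R = N_R = R^n as row vectors over an abstract R : realType,
   M = N = Z^n (integer row vectors), pairing <v,u> = dot product. *)
From mathcomp Require Import all_boot all_order all_algebra.
From mathcomp Require Import reals.
Set Implicit Arguments.
Unset Strict Implicit.
Unset Printing Implicit Defensive.
Import GRing.Theory Num.Theory.
Local Open Scope ring_scope.

Section ToricDefs.
Variables (R : realType) (n : nat).

Local Notation vec := 'rV[R]_n.

Definition dot (v u : vec) : R := \sum_(i < n) v 0 i * u 0 i.

Definition lattice (u : vec) : Prop :=
  exists z : 'rV[int]_n, u = map_mx (fun x : int => x%:~R) z.

Definition primitive (u : vec) : Prop :=
  lattice u /\ forall d : nat, (1 < d)%N -> ~ lattice ((d%:R)^-1 *: u).

Definition cone_gen (S : seq vec) (x : vec) : Prop :=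
  exists a : 'I_(size S) -> R,
    (forall j, 0 <= a j) /\ x = \sum_(j < size S) a j *: S`_j.

Definition same_set (C D : vec -> Prop) : Prop := forall x, C x <-> D x.

Definition rational_polyhedral_cone (C : vec -> Prop) : Prop :=
  exists S : seq vec, (forall u, u \in S -> lattice u) /\ same_set C (cone_gen S).

Definition strongly_convex (C : vec -> Prop) : Prop :=
  forall x, C x -> C (- x) -> x = 0.

Definition is_face (C F : vec -> Prop) : Prop :=
  exists m : vec, (forall x, C x -> 0 <= dot m x) /\
    same_set F (fun x => C x /\ dot m x = 0).

Definition in_fan (I : finType) (cone : I -> vec -> Prop) (F : vec -> Prop) : Prop :=
  exists j, same_set (cone j) F.

Definition is_fan (I : finType) (cone : I -> vec -> Prop) : Prop :=
  [/\ forall j, rational_polyhedral_cone (cone j) /\ strongly_convex (cone j),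
      forall j F, is_face (cone j) F -> in_fan cone F &
      forall j1 j2, is_face (cone j1) (fun x => cone j1 x /\ cone j2 x) /\
                    is_face (cone j2) (fun x => cone j1 x /\ cone j2 x)].

Definition complete_fan (I : finType) (cone : I -> vec -> Prop) : Prop :=
  is_fan cone /\ forall x, exists j, cone j x.

Definition ray_gen (I : finType) (cone : I -> vec -> Prop) (rho : vec) : Prop :=
  primitive rho /\ in_fan cone (cone_gen [:: rho]).

Definition rational_PL (I : finType) (cone : I -> vec -> Prop) (phi : vec -> R) : Prop :=
  forall j, exists q : 'rV[rat]_n,
    forall x, cone j x -> phi x = dot (map_mx (fun r : rat => ratr r) q) x.

Definition convex_fun (phi : vec -> R) : Prop :=
  forall (x y : vec) (t : R), 0 <= t <= 1 ->
    phi (t *: x + (1 - t) *: y) <= t * phi x + (1 - t) * phi y.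

(* Q-nef partition: part rho = i (i : 'I_k.+1) means rho \in E_{i+1};
   E_{k+1} corresponds to ord_max. *)
Definition Qnef_partition (I : finType) (cone : I -> vec -> Prop) (k : nat)
    (part : vec -> 'I_k.+1) : Prop :=
  exists phi : 'I_k.+1 -> vec -> R,
    forall i, [/\ convex_fun (phi i), rational_PL cone (phi i) &
      forall rho, ray_gen cone rho -> phi i rho = (if part rho == i then 1 else 0)].

(* amenable collection: v i (i : 'I_k) is v_{i+1}, subordinate to E_{i+1} *)
Definition amenable (I : finType) (cone : I -> vec -> Prop) (k : nat)
    (part : vec -> 'I_k.+1) (v : 'I_k -> vec) : Prop :=
  (forall i, lattice (v i)) /\
  forall (i : 'I_k) rho, ray_gen cone rho ->
    [/\ (nat_of_ord (part rho) = nat_of_ord i -> dot (v i) rho = -1),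
        ((nat_of_ord i < part rho)%N -> 0 <= dot (v i) rho) &
        ((part rho < nat_of_ord i)%N -> dot (v i) rho = 0)].

Definition in_MV (k : nat) (v : 'I_k -> vec) (u : vec) : Prop :=
  forall i, dot (v i) u = 0.

End ToricDefs.

(* Write the cone C as the conic hull of an irredundant family of lattice
   vectors.  Farkas' lemma shows that each generator spans an exposed ray of C;
   rescaled to be primitive, it is a ray generator of the fan.  Expand the
   nonzero u in M_V as a nonnegative combination of these rays.  If none of them
   lay in E_{k+1}, let l be the largest index of a part E_l containing a ray with
   positive coefficient: by amenability <v_l, u> is a sum of terms equal to 0 or
   to minus a coefficient, one of them negative, contradicting u in M_V. *)

From HB Require Import structures.
From mathcomp Require Import all_boot all_order all_algebra.
From mathcomp Require Import reals.
From Stdlib Require Import Classical.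
From mathcomp Require Import ring lra zify.
Set Implicit Arguments.
Unset Strict Implicit.
Unset Printing Implicit Defensive.
Import Order.TTheory GRing.Theory Num.Theory.
Local Open Scope ring_scope.

Section ConicHull.
Variables (R : realType) (n : nat).
Local Notation vec := 'rV[R]_n.

Lemma dotC (x y : vec) : dot x y = dot y x.
Proof. by apply: eq_bigr => i _; rewrite mulrC. Qed.

Lemma dot_is_linear (x : vec) : linear_for *%R (dot x).
Proof.
move=> c y z; rewrite /dot mulr_sumr -big_split; apply: eq_bigr => i _.
by rewrite !mxE mulrDr mulrCA.
Qed.

HB.instance Definition _ (x : vec) :=
  GRing.isLinear.Build R vec R _ (dot x) (dot_is_linear x).

Lemma dotNl (x y : vec) : dot (- x) y = - dot x y.
Proof. by rewrite dotC linearN /= dotC. Qed.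

Lemma dotBl (x x' y : vec) : dot (x - x') y = dot x y - dot x' y.
Proof. by rewrite dotC linearB /= !(dotC y). Qed.

Lemma dotZl c (x y : vec) : dot (c *: x) y = c * dot x y.
Proof. by rewrite dotC linearZ /= dotC. Qed.

Lemma dot_self_gt0 (x : vec) : x != 0 -> 0 < dot x x.
Proof.
move=> x0; rewrite lt_def sumr_ge0 ?andbT => [|i _]; last by rewrite -expr2 sqr_ge0.
apply: contra x0; rewrite /dot psumr_eq0 => [/allP x0|i _]; last by rewrite -expr2 sqr_ge0.
apply/eqP/rowP => i; rewrite mxE.
by have /= := x0 i (mem_index_enum _); rewrite mulf_eq0 orbb => /eqP.
Qed.

Definition conic m (f : 'I_m -> vec) (x : vec) : Prop :=
  exists a : 'I_m -> R, (forall j, 0 <= a j) /\ x = \sum_(j < m) a j *: f j.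

Section Conic.
Variables (m : nat) (f : 'I_m -> vec).

Lemma conic0 : conic f 0.
Proof. by exists (fun=> 0); split=> //; rewrite big1 // => i _; rewrite scale0r. Qed.

Lemma conicD x y : conic f x -> conic f y -> conic f (x + y).
Proof.
move=> [a [a0 ->]] [b [b0 ->]]; exists (fun j => a j + b j); split.
  by move=> j; rewrite addr_ge0.
by rewrite -big_split; apply: eq_bigr => i _; rewrite scalerDl.
Qed.

Lemma conicZ c x : 0 <= c -> conic f x -> conic f (c *: x).
Proof.
move=> c0 [a [a0 ->]]; exists (fun j => c * a j); split.
  by move=> j; rewrite mulr_ge0.
by rewrite scaler_sumr; apply: eq_bigr => i _; rewrite scalerA.
Qed.

Lemma conic_gen i : conic f (f i).
Proof.
exists (fun j => (j == i)%:R); split=> [j|]; first by rewrite ler0n.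
by rewrite (bigD1 i) //= eqxx scale1r big1 ?addr0 // => j /negbTE ->; rewrite scale0r.
Qed.

End Conic.

Lemma sub_conic m p (f : 'I_m -> vec) (g : 'I_p -> vec) :
  (forall i, conic g (f i)) -> forall x, conic f x -> conic g x.
Proof.
move=> fg x [a [a0 ->]]; elim/big_rec: _ => [|i y _ gy]; first exact: conic0.
by apply: conicD => //; apply: conicZ.
Qed.

Lemma conic_neq0_coef m (f : 'I_m -> vec) (a : 'I_m -> R) :
  (forall i, 0 <= a i) -> \sum_(i < m) a i *: f i != 0 -> exists i, 0 < a i.
Proof.
move=> a_ge0 /eqP sum_neq0; apply: NNPP => no_pos; apply/sum_neq0/big1 => i _.
have := a_ge0 i; rewrite le_eqVlt => /orP[/eqP <-|ai]; first by rewrite scale0r.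
by case: no_pos; exists i.
Qed.

Lemma farkas m (f : 'I_m -> vec) (b : vec) :
  conic f b \/ exists y, (forall i, 0 <= dot (f i) y) /\ dot b y < 0.
Proof.
elim: m f b => [|m IH] f b.
  have [->|b0] := eqVneq b 0; first by left; apply: conic0.
  by right; exists (- b); split=> [[]//|]; rewrite linearN oppr_lt0 dot_self_gt0.
pose g i := f (lift ord_max i); pose a := f ord_max.
have [gb|[y [gy by0]]] := IH g b.
  by left; apply: sub_conic gb => i; apply: conic_gen.
have [ay|ay] := leP 0 (dot a y).
  right; exists y; split=> // i.
  by case: (unliftP ord_max i) => [j ->|->]; [exact: gy | exact: ay].
(* Project [g] and [b] along [a] onto the hyperplane [y = 0] and recurse. *)
pose proj x := x - (dot x y / dot a y) *: a.
have [pgb|[z [pgz pbz]]] := IH (fun i => proj (g i)) (proj b).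
  left; rewrite -[b](subrK ((dot b y / dot a y) *: a)).
  apply: conicD; last by apply: conicZ; [rewrite mulr_le0 ?invr_le0 ?ltW | apply: conic_gen].
  apply: sub_conic pgb => i; rewrite /proj -scaleNr; apply: conicD; first exact: conic_gen.
  by apply: conicZ; [rewrite oppr_ge0 mulr_ge0_le0 ?gy ?invr_le0 ?ltW | apply: conic_gen].
right; exists (z - (dot a z / dot a y) *: y); split.
  move=> i; rewrite linearB linearZ /=.
  case: (unliftP ord_max i) => [j ->|->]; last by rewrite divfK ?lt_eqF // subrr.
  by have := pgz j; rewrite /proj dotBl dotZl -/(g j); congr (_ <= _); field; rewrite lt_eqF.
by move: pbz; rewrite /proj dotBl dotZl linearB linearZ /=; congr (_ < _); field; rewrite lt_eqF.
Qed.

Definition erase_gen m (f : 'I_m -> vec) j i : vec := if i == j then 0 else f i.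

Lemma conic_erase_gen m (f : 'I_m -> vec) j i : i != j -> conic (erase_gen f j) (f i).
Proof. by move=> ij; have := conic_gen (erase_gen f j) i; rewrite /erase_gen (negbTE ij). Qed.

Lemma sub_conic_erase m (f : 'I_m -> vec) j x : conic (erase_gen f j) x -> conic f x.
Proof.
apply: sub_conic => i; rewrite /erase_gen; case: eqP => _; [exact: conic0 | exact: conic_gen].
Qed.

Section Irredundant.
Variables (m : nat) (f : 'I_m -> vec).
Hypothesis pointed : forall x, conic f x -> conic f (- x) -> x = 0.
Hypothesis irredundant : forall j, ~ conic (erase_gen f j) (f j).

Lemma irredundant_gen_neq0 j : f j != 0.
Proof. by apply/eqP => fj0; apply: (irredundant (j := j)); rewrite fj0; apply: conic0. Qed.

Lemma separate_gens s t : s != t ->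
  exists y, [/\ dot (f t) y = 0, forall i, 0 <= dot (f i) y & 0 < dot (f s) y].
Proof.
move=> st.
pose h i := if i == s then - f t else f i.
have [[c [c0 E]]|[y [hy sy]]] := farkas h (- f s); last first.
  have := hy t; have := hy s; rewrite /h eqxx eq_sym (negbTE st) dotNl => ty1 ty2.
  rewrite dotNl oppr_lt0 in sy; exists y; split=> [|i|//]; first lra.
  by have := hy i; rewrite /h; case: eqP => [-> _|_ //]; exact: ltW.
exfalso; pose w := \sum_(i < m) c i *: erase_gen (erase_gen f t) s i.
have wC : conic (erase_gen f t) w by apply: (@sub_conic_erase _ _ s); exists c.
pose rest := \sum_(i | (i != s) && (i != t)) c i *: f i.
have ts : t != s by rewrite eq_sym.
have {E} E : - f s = w + (c t - c s) *: f t.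
  have -> : w = rest.
    rewrite /w (bigD1 s) // (bigD1 t) //= /erase_gen !eqxx (negbTE ts) !scaler0 !add0r.
    by apply: eq_bigr => i /andP[/negbTE -> /negbTE ->].
  rewrite E (bigD1 s) // (bigD1 t) //= /h eqxx (negbTE ts) scalerN scalerBl.
  have -> : \sum_(i | (i != s) && (i != t)) c i *: h i = rest.
    by apply: eq_bigr => i /andP[i_s _]; rewrite /h (negbTE i_s).
  by rewrite [RHS]addrC addrCA addrA.
have [ct|ct] := leP 0 (c t - c s).
  have fs0 : f s = 0.
    apply: pointed; first exact: conic_gen.
    by rewrite E; apply: conicD; [exact: sub_conic_erase wC | apply: conicZ; last exact: conic_gen].
  by have := irredundant_gen_neq0 s; rewrite fs0 eqxx.
apply: (irredundant (j := t)).
have cst : 0 < c s - c t by lra.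
have -> : f t = (c s - c t)^-1 *: (w + f s).
  by rewrite -[f s]opprK E opprD addrA subrr add0r -scaleNr opprB scalerA mulVf ?gt_eqF ?scale1r.
apply: conicZ; first by rewrite invr_ge0 ltW.
by apply: conicD => //; apply: conic_erase_gen.
Qed.

Lemma exposed_gen t : exists y, [/\ dot (f t) y = 0, forall i, 0 <= dot (f i) y &
  forall i, i != t -> 0 < dot (f i) y].
Proof.
have /fin_all_exists [y ys] : forall s, exists y, s != t ->
    [/\ dot (f t) y = 0, forall i, 0 <= dot (f i) y & 0 < dot (f s) y].
  move=> s; have [->|st] := eqVneq s t; first by exists 0.
  by have [y ys] := separate_gens st; exists y.
exists (\sum_(s | s != t) y s); split=> [|i|i it]; rewrite linear_sum.
- by rewrite big1 // => s /ys[].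
- by rewrite sumr_ge0 // => s /ys[_ + _]; apply.
rewrite (bigD1 i) //=; apply: ltr_wpDr; last by case: (ys i it).
by rewrite sumr_ge0 // => s /andP[/ys[_ + _] _]; apply.
Qed.

End Irredundant.

Lemma conic_drop_redundant m (f : 'I_m.+1 -> vec) j :
  conic (erase_gen f j) (f j) -> forall x, conic f x <-> conic (fun i => f (lift j i)) x.
Proof.
move=> fj x; split; last by apply: sub_conic => i; apply: conic_gen.
have gen_lift i : conic (fun i => f (lift j i)) (f (lift j i)) by exact: conic_gen.
apply: sub_conic => i; case: (unliftP j i) => [i' ->|->] //.
apply: sub_conic fj => k; rewrite /erase_gen; case: (unliftP j k) => [k' ->|->].
  by rewrite eq_sym (negbTE (neq_lift j k')).
by rewrite eqxx; apply: conic0.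
Qed.

Lemma irredundant_subfamily m (f : 'I_m -> vec) : exists p (g : 'I_p -> vec),
  [/\ forall i, exists j, g i = f j, forall x, conic f x <-> conic g x &
      forall j, ~ conic (erase_gen g j) (g j)].
Proof.
elim: m f => [|m IH] f; first by exists 0, f; split=> [i|//|[]//]; exists i.
have [[j fj]|irr] := classic (exists j, conic (erase_gen f j) (f j)); last first.
  by exists m.+1, f; split=> [i|//|j fj]; [exists i | apply: irr; exists j].
have [p [g [gf fg irr]]] := IH (fun i => f (lift j i)).
exists p, g; split=> // [i|x]; first by have [i' ->] := gf i; exists (lift j i').
by rewrite (conic_drop_redundant fj).
Qed.

Lemma cone_gen1P (rho x : vec) : cone_gen [:: rho] x <-> exists2 c, 0 <= c & x = c *: rho.
Proof.
split=> [[a [a0 ->]]|[c c0 ->]]; first by exists (a ord0); rewrite ?big_ord1.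
by exists (fun=> c); rewrite big_ord1.
Qed.

Lemma exposed_face (C : vec -> Prop) m (f : 'I_m -> vec) t y c :
  same_set C (conic f) -> dot (f t) y = 0 -> (forall i, 0 <= dot (f i) y) ->
  (forall i, i != t -> 0 < dot (f i) y) -> 0 < c ->
  is_face C (cone_gen [:: c *: f t]).
Proof.
move=> Cf yt y_ge0 y_gt0 c_gt0.
have dot_conic a : dot y (\sum_(i < m) a i *: f i) = \sum_(i < m) a i * dot (f i) y.
  by rewrite linear_sum; apply: eq_bigr => i _; rewrite linearZ dotC.
exists y; split=> [x /Cf [a [a0 ->]]|x]; first by rewrite dot_conic sumr_ge0 // => i _; rewrite mulr_ge0.
rewrite cone_gen1P; split=> [[d d0 ->]|[/Cf [a [a0 xE]] yx]].
  split; last by rewrite !linearZ /= dotC yt !mulr0.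
  by apply/Cf; rewrite scalerA; apply: conicZ; [rewrite mulr_ge0 // ltW | apply: conic_gen].
have a_eq0 i : i != t -> a i = 0.
  move=> it; have /eqP : a i * dot (f i) y = 0.
    by move: yx; rewrite xE dot_conic => /psumr_eq0P -> // j _; rewrite mulr_ge0.
  by rewrite mulf_eq0 (gt_eqF (y_gt0 i it)) orbF => /eqP.
exists (a t / c); first by rewrite divr_ge0 // ltW.
rewrite xE (bigD1 t) //= big1 ?addr0 => [|i /a_eq0 ->]; last by rewrite scale0r.
by rewrite scalerA divfK ?gt_eqF.
Qed.

End ConicHull.

Section Lattice.
Variables (R : realType) (n : nat).
Local Notation intr_row z := (map_mx (fun x : int => (x%:~R : R)) z).

Lemma norm1_eq0 (z : 'rV[int]_n) : (\sum_(i < n) `|z ord0 i| == 0)%N = (z == 0).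
Proof.
rewrite sum_nat_eq0; apply/forallP/eqP => [z0|-> i]; last by rewrite mxE.
by apply/rowP => i; rewrite mxE; apply/eqP; rewrite -absz_eq0; apply: implyP (z0 i) _.
Qed.

Lemma primitive_multiple_intr_row (z : 'rV[int]_n) :
  z != 0 -> exists c, 0 < c /\ primitive (c *: intr_row z).
Proof.
move: {2}(\sum_(i < n) `|z ord0 i|)%N (leqnn (\sum_(i < n) `|z ord0 i|)%N) => N.
elim: N z => [|N IH] z zN z0; first by move: zN; rewrite leqn0 norm1_eq0 (negbTE z0).
have [|nprim] := classic (primitive (intr_row z)); first by exists 1; rewrite scale1r.
have [d [d1 [z' z'E]]] : exists d : nat, (1 < d)%N /\ lattice ((d%:R)^-1 *: intr_row z).
  apply: NNPP => H; apply: nprim; split; first by exists z.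
  by move=> d d1 L; apply: H; exists d.
have dR : (d%:R : R) != 0 by rewrite pnatr_eq0 -lt0n ltnW.
have zE i : z ord0 i = d%:Z * z' ord0 i.
  apply: (@intr_inj R); move/rowP/(_ i): z'E; rewrite !mxE => z'i.
  by rewrite intrM -z'i mulrA mulfV // mul1r.
have z'0 : z' != 0.
  by apply: contra z0 => /eqP z'0; apply/eqP/rowP => i; rewrite zE z'0 !mxE mulr0.
have z'N : (\sum_(i < n) `|z' ord0 i| <= N)%N.
  have := zN; rewrite (eq_bigr (fun i => d * `|z' ord0 i|)%N) => [|i _]; last by rewrite zE abszM.
  rewrite -big_distrr /=; have := z'0; rewrite -norm1_eq0 -lt0n; nia.
have [c [c0 Pc]] := IH z' z'N z'0.
exists (c / d%:R); split; first by rewrite divr_gt0 // ltr0n ltnW.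
by rewrite -z'E scalerA in Pc.
Qed.

Lemma lattice_primitive_multiple (u : 'rV[R]_n) :
  lattice u -> u != 0 -> exists c, 0 < c /\ primitive (c *: u).
Proof.
move=> [z ->] u0; apply: primitive_multiple_intr_row; apply: contra u0 => /eqP ->.
by apply/eqP/rowP => i; rewrite !mxE.
Qed.

End Lattice.

Section Fan.
Variables (R : realType) (n : nat) (I : finType) (cone : I -> 'rV[R]_n -> Prop).

Lemma irredundant_gen_ray C m (f : 'I_m -> 'rV[R]_n) :
  is_fan cone -> same_set (cone C) (conic f) -> (forall i, lattice (f i)) ->
  (forall j, ~ conic (erase_gen f j) (f j)) ->
  forall t, exists c, 0 < c /\ ray_gen cone (c *: f t).
Proof.
move=> [cone_ok cone_faces _] Cf f_lat irr t.
have pointed x : conic f x -> conic f (- x) -> x = 0.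
  by move=> /Cf Cx /Cf CNx; apply: (proj2 (cone_ok C)).
have [c [c_gt0 prim]] := lattice_primitive_multiple (f_lat t) (irredundant_gen_neq0 irr t).
have [y [yt y_ge0 y_gt0]] := exposed_gen pointed irr t.
by exists c; split=> //; split=> //; apply: (cone_faces C); apply: exposed_face Cf yt y_ge0 y_gt0 c_gt0.
Qed.

Lemma amenable_dot_lt0 k (part : 'rV[R]_n -> 'I_k.+1) (v : 'I_k -> 'rV[R]_n)
    m (rho : 'I_m -> 'rV[R]_n) u :
  amenable cone part v -> (forall i, ray_gen cone (rho i)) ->
  (forall i, part (rho i) != ord_max) -> conic rho u -> u != 0 ->
  exists l, dot (v l) u < 0.
Proof.
move=> [_ amen] rays not_max [a [a_ge0 ->]] /(conic_neq0_coef a_ge0) [i0 ai0].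
(* Test against v_l, where l is the largest part index among the rays with a positive coefficient. *)
have [imax a_imax is_max] := @arg_maxnP _ i0 (fun i => 0 < a i) (fun i => nat_of_ord (part (rho i))) ai0.
have l_lt_k : (part (rho imax) < k)%N.
  have := ltn_ord (part (rho imax)); rewrite ltnS leq_eqVlt => /orP[/eqP part_k|//].
  by case/eqP: (not_max imax); apply: val_inj.
pose l : 'I_k := Ordinal l_lt_k.
have dot_rho_l i : 0 < a i -> dot (v l) (rho i) = -1 \/ dot (v l) (rho i) = 0.
  move=> /is_max /=; rewrite leq_eqVlt; have [eq_l _ lt_l] := amen l (rho i) (rays i).
  by case/orP=> [/eqP/eq_l|/lt_l]; [left | right].
have term_le0 i : a i * dot (v l) (rho i) <= 0.
  have [->|ai] := eqVneq (a i) 0; first by rewrite mul0r.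
  have ai_gt0 : 0 < a i by rewrite lt_def ai a_ge0.
  by have [->|->] := dot_rho_l i ai_gt0; rewrite ?mulr0 // mulrN1 oppr_le0 ltW.
have [eq_l _ _] := amen l (rho imax) (rays imax).
exists l; rewrite linear_sum (bigD1 imax) //= linearZ /= eq_l // mulrN1.
have : \sum_(i < m | i != imax) dot (v l) (a i *: rho i) <= 0.
  by apply: sumr_le0 => i _; rewrite linearZ term_le0.
by have := a_imax; lra.
Qed.

End Fan.

Theorem lemma2p11 (R : realType) (n k : nat) (I : finType)
    (cone : I -> 'rV[R]_n -> Prop) (part : 'rV[R]_n -> 'I_k.+1)
    (v : 'I_k -> 'rV[R]_n) (C : I) :
  complete_fan cone ->
  Qnef_partition cone part ->
  amenable cone part v ->
  (exists u : 'rV[R]_n, [/\ cone C u, u <> 0 & in_MV v u]) ->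
  exists rho : 'rV[R]_n, [/\ ray_gen cone rho, cone C rho & part rho = ord_max].
Proof.
move=> [fan _] _ amen [u [Cu /eqP u0 uMV]].
have [cone_ok _ _] := fan; have [[S [S_lat CS]] _] := cone_ok C.
have [m [f [f_S Sf irr]]] := irredundant_subfamily (fun j : 'I_(size S) => S`_j).
have Cf : same_set (cone C) (conic f) by move=> x; rewrite -Sf; exact: CS.
have f_lat i : lattice (f i) by have [j ->] := f_S i; apply/S_lat/mem_nth.
have /fin_all_exists [c c_rays] := irredundant_gen_ray fan Cf f_lat irr.
have c_gt0 i := proj1 (c_rays i); have rays i := proj2 (c_rays i).
have rays_u : conic (fun i => c i *: f i) u.
  apply: sub_conic (proj1 (Cf u) Cu) => i; rewrite -[f i](scalerK (lt0r_neq0 (c_gt0 i))).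
  by apply: conicZ; [rewrite invr_ge0 ltW | exact: conic_gen].
apply: NNPP => no_max.
have not_max i : part (c i *: f i) != ord_max.
  apply/eqP => max_i; apply: no_max; exists (c i *: f i); split=> //.
  by apply/Cf; apply: conicZ; [exact: ltW | exact: conic_gen].
have [l] := amenable_dot_lt0 amen rays not_max rays_u u0.
by rewrite uMV ltxx.
Qed.
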